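(* Let $\mathcal{L}_{\mathrm{std}}=\{u,u^2,u^3,u_x,u_{xx},u_{xxx},u_{xxxx},u\cdot u_x,u\cdot u_{xx},u^2\cdot u_x\}$ and $\mathcal{L}_G^{\mathrm{theory}}=\{u_x,u_{xx},u_{xxx},u_{xxxx},u\cdot u_x\}$. Consider the family of autonomous evolution PDEs $u_t=F$ where $F$ is a real linear combination of the terms of $\mathcal{L}_{\mathrm{std}}$ (and the functions $1,u,u^2,u_x,u_{xx},u\cdot u_x$ are linearly independent on the jet space $J^{(2)}$). Then $\mathcal{L}_G^{\mathrm{theory}}$ is the unique maximal sublibrary of $\mathcal{L}_{\mathrm{std}}$ consisting of terms that can appear (with a free coefficient, or, for $u\cdot u_x$, with the fixed Galilean coefficient $-1$) in some PDE of this family admitting the Galilean generator $t\partial_x+\partial_u$: every term of $\mathcal{L}_G^{\mathrm{theory}}$ appears with nonzero coefficient in at least one Galilean-invariant PDE of the family, and no term of $\mathcal{L}_{\mathrm{std}}\setminus\mathcal{L}_G^{\mathrm{theory}}$ can appear with nonzero coefficient in any Galilean-invariant PDE of the family.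
   Context: $u=u(x,t)$ is a scalar field, subscripts denote partial derivatives. A PDE $u_t=F$ admits (is invariant under) the Galilean generator $\mathbf v=t\partial_x+\partial_u$ if the prolonged vector field $\mathrm{pr}\,\mathbf v$ annihilates $u_t-F$ on solutions; equivalently, the Galilean boost $(x,t,u)\mapsto(x+ct,t,u+c)$ maps solutions to solutions for all $c\in\mathbb R$. *)

From Stdlib Require Import Reals List.
Import ListNotations.
Open Scope R_scope.

Inductive term : Type :=
  | T_u | T_u2 | T_u3 | T_ux | T_uxx | T_uxxx | T_uxxxx
  | T_uux | T_uuxx | T_u2ux.

Definition L_std : list term :=
  [T_u; T_u2; T_u3; T_ux; T_uxx; T_uxxx; T_uxxxx; T_uux; T_uuxx; T_u2ux].

Definition L_G_theory : list term := [T_ux; T_uxx; T_uxxx; T_uxxxx; T_uux].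

Record jet : Type := mkJet {
  j_u : R; j_ux : R; j_uxx : R; j_uxxx : R; j_uxxxx : R; j_ut : R }.

Definition eval_term (s : term) (J : jet) : R :=
  match s with
  | T_u => j_u J
  | T_u2 => j_u J ^ 2
  | T_u3 => j_u J ^ 3
  | T_ux => j_ux J
  | T_uxx => j_uxx J
  | T_uxxx => j_uxxx J
  | T_uxxxx => j_uxxxx J
  | T_uux => j_u J * j_ux J
  | T_uuxx => j_u J * j_uxx J
  | T_u2ux => j_u J ^ 2 * j_ux J
  end.

Definition rhs (a : term -> R) (J : jet) : R :=
  fold_right Rplus 0 (map (fun s => a s * eval_term s J) L_std).

Definition on_equation (a : term -> R) (J : jet) : Prop := j_ut J = rhs a J.

(* Prolongation to the jet space of the Galilean boost
   (x,t,u) |-> (x + c t, t, u + c):  u ~> u + c, x-derivatives unchanged,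
   u_t ~> u_t - c u_x. *)
Definition boost_jet (c : R) (J : jet) : jet :=
  mkJet (j_u J + c) (j_ux J) (j_uxx J) (j_uxxx J) (j_uxxxx J)
        (j_ut J - c * j_ux J).

(* The PDE u_t = F admits the Galilean generator t d_x + d_u: the (prolonged)
   boost maps the equation manifold to itself for every c. *)
Definition galilean_invariant (a : term -> R) : Prop :=
  forall (c : R) (J : jet), on_equation a J -> on_equation a (boost_jet c J).

(* Boosting u to u + c shifts every u-dependent term, and the equation stays
   invariant iff this shift is exactly compensated by the change u_t - c u_x
   of the left-hand side.  Restricted to u = 0 the defect is a polynomial in
   (c, u_x, u_xx) whose coefficients are a_u, a_u2, a_u3, a_uuxx, a_u2ux and
   a_uux + 1, so invariance forces all of them to vanish, while the
   x-derivative terms are untouched by the boost and remain free. *)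
From Stdlib Require Import Reals List Lra.
Open Scope R_scope.

Definition galilean_coefficients (a : term -> R) : Prop :=
  a T_u = 0 /\ a T_u2 = 0 /\ a T_u3 = 0 /\
  a T_uux = -1 /\ a T_uuxx = 0 /\ a T_u2ux = 0.

Lemma rhs_boost_jet (a : term -> R) (c : R) (J : jet) :
  rhs a (boost_jet c J) - rhs a J =
    a T_u * c + a T_u2 * (2 * j_u J * c + c ^ 2)
    + a T_u3 * (3 * j_u J ^ 2 * c + 3 * j_u J * c ^ 2 + c ^ 3)
    + a T_uux * c * j_ux J + a T_uuxx * c * j_uxx J
    + a T_u2ux * (2 * j_u J * c + c ^ 2) * j_ux J.
Proof.
  destruct J as [u ux uxx uxxx uxxxx ut]; unfold rhs; simpl; ring.
Qed.

Lemma galilean_invariantE (a : term -> R) :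
  galilean_invariant a <->
  forall (c : R) (J : jet), rhs a (boost_jet c J) = rhs a J - c * j_ux J.
Proof.
  split.
  - intros inv c [u ux uxx uxxx uxxxx ut].
    (* rhs ignores u_t, so we may move J onto the equation first *)
    set (J0 := mkJet u ux uxx uxxx uxxxx (rhs a (mkJet u ux uxx uxxx uxxxx ut))).
    assert (on_J0 : on_equation a J0) by (unfold on_equation, rhs; reflexivity).
    pose proof (inv c J0 on_J0) as H; unfold on_equation in H; simpl in H.
    unfold rhs in *; simpl in *; lra.
  - intros E c J on_J; unfold on_equation in *; simpl.
    rewrite on_J, E; unfold rhs; reflexivity.
Qed.

Lemma galilean_invariant_coefficients (a : term -> R) :
  galilean_invariant a <-> galilean_coefficients a.
Proof.
  rewrite galilean_invariantE; split.
  - intros E.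
    assert (defect : forall c ux uxx,
      a T_u * c + a T_u2 * c ^ 2 + a T_u3 * c ^ 3 + (a T_uux + 1) * c * ux
      + a T_uuxx * c * uxx + a T_u2ux * c ^ 2 * ux = 0).
    { intros c ux uxx.
      pose proof (rhs_boost_jet a c (mkJet 0 ux uxx 0 0 0)) as D.
      rewrite E in D; simpl in D; lra. }
    pose proof (defect 1 0 0); pose proof (defect (-1) 0 0);
    pose proof (defect 2 0 0); pose proof (defect 1 0 1);
    pose proof (defect 1 1 0); pose proof (defect (-1) 1 0).
    unfold galilean_coefficients; repeat split; nra.
  - intros (a_u & a_u2 & a_u3 & a_uux & a_uuxx & a_u2ux) c J.
    pose proof (rhs_boost_jet a c J) as D.
    rewrite a_u, a_u2, a_u3, a_uux, a_uuxx, a_u2ux in D; lra.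
Qed.

Definition galilean_model (s : term) : R :=
  match s with
  | T_ux | T_uxx | T_uxxx | T_uxxxx => 1
  | T_uux => -1
  | _ => 0
  end.

Lemma galilean_model_invariant : galilean_invariant galilean_model.
Proof.
  apply galilean_invariant_coefficients; unfold galilean_coefficients; simpl.
  repeat split; reflexivity.
Qed.

Theorem mainTheorem2 :
  (forall s : term, In s L_G_theory ->
     exists a : term -> R, galilean_invariant a /\ a s <> 0) /\
  (forall s : term, In s L_std -> ~ In s L_G_theory ->
     forall a : term -> R, galilean_invariant a -> a s = 0) /\
  (forall a : term -> R, galilean_invariant a -> a T_uux = -1).
Proof.
  split; [| split].
  - intros s s_in; exists galilean_model; split; [exact galilean_model_invariant |].
    simpl in s_in; destruct s_in as [<- | [<- | [<- | [<- | [<- | []]]]]];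
      simpl; lra.
  - intros s _ s_notin a inv.
    apply galilean_invariant_coefficients in inv.
    destruct inv as (a_u & a_u2 & a_u3 & _ & a_uuxx & a_u2ux).
    destruct s; try assumption; exfalso; apply s_notin; simpl; tauto.
  - intros a inv; apply galilean_invariant_coefficients in inv; apply inv.
Qed.
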